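(* Let $L\in\mathbb N$, ${\bf A}\in\mathbb R^{M\times N}$, ${\bf b}\in\mathbb R^M$, and let ${\bf x}$ follow the gradient flow $\partial_t{\bf x}=-\nabla\mathcal L({\bf x})$, ${\bf x}(0)={\bf x}_0$, with ${\bf x}_0>0$ (entrywise) and ${\bf x}(t)>0$ for all $t\ge 0$ (when $L\neq 2$ and $2-L<0$; for $L=2$ positivity is needed for the logarithm). Then the quantity $$h_0(t):=(I-{\bf A}^\dagger{\bf A})\cdot\begin{cases}\log({\bf x}(t)) & L=2,\\ {\bf x}(t)^{\odot(2-L)} & L\neq2\end{cases}$$ is the same for all $t\ge0$.
   Context: $\odot$ denotes entrywise product/power, $\log$ acts entrywise, vector inequalities are entrywise; ${\bf A}^\dagger$ is the Moore–Penrose pseudoinverse. Loss: $\mathcal L({\bf x})=\frac{1}{2L}\|{\bf A}{\bf x}^{\odot L}-{\bf b}\|_2^2$, with $\nabla\mathcal L({\bf x})=[{\bf A}^\top({\bf A}{\bf x}^{\odot L}-{\bf b})]\odot{\bf x}^{\odot(L-1)}$. *)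

From HB Require Import structures.
From mathcomp Require Import all_boot all_order all_algebra.
From mathcomp Require Import all_classical all_reals all_analysis.
Set Implicit Arguments. Unset Strict Implicit. Unset Printing Implicit Defensive.
Import Order.TTheory GRing.Theory Num.Theory.
Local Open Scope ring_scope.

(* Moore--Penrose pseudoinverse, characterized by the four Penrose equations
   (which determine it uniquely). *)
Definition is_MP_pinv (R : realType) (m n : nat)
    (A : 'M[R]_(m, n)) (P : 'M[R]_(n, m)) : Prop :=
  [/\ A *m P *m A = A, P *m A *m P = P,
      (A *m P)^T = A *m P & (P *m A)^T = P *m A].

Definition epow (R : realType) (n : nat) (x : 'cV[R]_n) (k : nat) : 'cV[R]_n :=
  map_mx (fun a => a ^+ k) x.

(* gradient of  L(x) = 1/(2L) ||A x^{⊙L} - b||^2 :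
   [A^T (A x^{⊙L} - b)] ⊙ x^{⊙(L-1)} *)
Definition gradL (R : realType) (m n L : nat)
    (A : 'M[R]_(m, n)) (b : 'cV[R]_m) (x : 'cV[R]_n) : 'cV[R]_n :=
  \col_i ((A^T *m (A *m epow x L - b)) i 0 * x i 0 ^+ (L - 1)).

Definition hvec (R : realType) (n L : nat) (x : 'cV[R]_n) : 'cV[R]_n :=
  if L == 2%N then map_mx (@ln R) x
  else map_mx (fun a => a ^ (2%:Z - L%:Z)) x.

From HB Require Import structures.
From mathcomp Require Import all_boot all_order all_algebra.
From mathcomp Require Import all_classical all_reals all_analysis.
From mathcomp Require Import ring zify.
Import Order.TTheory GRing.Theory Num.Theory numFieldNormedType.Exports.
Local Open Scope ring_scope.
Local Open Scope classical_set_scope.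

(* Conservation law for the gradient flow of
     L(x) = 1/(2L) ||A x^{⊙L} - b||^2.
   Write h for the scalar map a |-> log a (L = 2) or a |-> a^(2-L) (L <> 2).
   The point is that h'(a) * a^(L-1) is a constant k_L (1, resp. 2-L), so
   along the flow x' = -[A^T r] ⊙ x^{⊙(L-1)} (r the residual) the chain rule
   gives  d/dt h(x(t)) = -k_L A^T r(t),  which lies in the row space of A.
   The projector P = I - A^† A annihilates A^T (Penrose equations), hence
   d/dt P h(x(t)) = 0 for t > 0, and by continuity on [0, t] and the mean
   value theorem P h(x(t)) = P h(x(0)). *)

Section Transform.
Variable R : realType.

Definition hfun (L : nat) (a : R) : R :=
  if L == 2%N then ln a else a ^ (2%:Z - L%:Z).

(* The constant k_L with hfun' a = k_L / a^(L-1). *)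
Definition hslope (L : nat) : R :=
  if L == 2%N then 1 else (2%:Z - L%:Z)%:~R.

Lemma hvec_comp (T : Type) (n L : nat) (x : T -> 'cV[R]_n) (i : 'I_n) :
  (fun r => hvec L (x r) i 0) = hfun L \o (fun r => x r i 0).
Proof. by apply/funext => r; rewrite /hvec /hfun /=; case: eqP; rewrite mxE. Qed.

Lemma hfun_derive (L : nat) (a : R) : (0 < L)%N -> 0 < a ->
  is_derive a 1 (hfun L) (hslope L / a ^+ (L - 1)).
Proof.
move=> L0 a0; have a0' : a != 0 by rewrite gt_eqF.
rewrite /hfun /hslope; case: eqP => [->|L2].
  by rewrite div1r expr1; exact: is_derive1_ln.
case: L L0 L2 => [//|[_ _|[//|n _ _]]].
  have -> : (fun y : R => y ^ (2%:Z - 1%:Z)) = id.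
    by apply/funext => y; rewrite expr1z.
  by rewrite subnn expr0 divr1; exact: is_derive_id.
have e : 2%:Z - n.+3%:Z = - (n.+1)%:Z by lia.
have -> : (fun y : R => y ^ (2%:Z - n.+3%:Z)) = (fun y => (y ^+ n.+1)^-1).
  by apply/funext => y; rewrite e -exprnN.
have an1 : a ^+ n.+1 != 0 by rewrite expf_neq0.
have an0 : a ^+ n != 0 by rewrite expf_neq0.
have dX : is_derive a 1 (fun y : R => y ^+ n.+1) (n.+1%:R *: a ^+ n *: 1).
  by apply: DeriveDef; [exact: exprn_derivable | rewrite exp_derive].
refine (is_derive_eq (@is_deriveV R (fun y => y ^+ n.+1) a _ 1 an1 dX) _).
rewrite e rmorphN /= pmulrn scaler1 subSS subn0 !exprS expr0 mulr1 /GRing.scale /=.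
by field; rewrite an0 a0'.
Qed.

Lemma hfun_continuous (L : nat) (a : R) : (0 < L)%N -> 0 < a ->
  {for a, continuous (hfun L)}.
Proof.
move=> L0 a0; have [/derivable1_diffP da _] := @hfun_derive L a L0 a0.
exact: differentiable_continuous da.
Qed.

(* Chain rule along a flow u' = -g u^(L-1): the factor u^(L-1) cancels. *)
Lemma hfun_comp_derive (L : nat) (u : R -> R) (s g : R) :
  (0 < L)%N -> 0 < u s -> is_derive s 1 u (- (g * u s ^+ (L - 1))) ->
  is_derive s 1 (hfun L \o u) (- (hslope L * g)).
Proof.
move=> L0 us0 du.
refine (is_derive_eq (is_derive1_comp (@hfun_derive L _ L0 us0) du) _).
have us0' : u s ^+ (L - 1) != 0 by rewrite expf_neq0 // gt_eqF.
by rewrite mulrN; congr (- _); field.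
Qed.
End Transform.

(* I - A^† A is the projector onto ker A, hence it kills the range of A^T. *)
Lemma pinv_proj_mul_tr (R : realType) (m n : nat)
    (A : 'M[R]_(m, n)) (Adag : 'M[R]_(n, m)) :
  is_MP_pinv A Adag -> (1%:M - Adag *m A) *m A^T = 0.
Proof.
case=> AAdagA _ _ AdagA_sym.
have P_sym : (1%:M - Adag *m A)^T = 1%:M - Adag *m A.
  by rewrite linearB /= trmx1 AdagA_sym.
have AP0 : A *m (1%:M - Adag *m A) = 0.
  by rewrite mulmxBr mulmx1 mulmxA AAdagA subrr.
by rewrite -P_sym -trmx_mul AP0 trmx0.
Qed.

Section MatrixEntry.
Variables (R : realType) (m n : nat) (P : 'M[R]_(m, n)) (j : 'I_m).

Lemma mulmx_entry_sum (T : Type) (v : T -> 'cV[R]_n) :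
  (fun r => (P *m v r) j 0) = \sum_(i < n) (fun r => P j i * v r i 0).
Proof. by apply/funext => r; rewrite mxE fct_sumE. Qed.

Lemma mulmx_entry_derive (v : R -> 'cV[R]_n) (s : R) (dv : 'cV[R]_n) :
  (forall i, is_derive s 1 (fun r => v r i 0) (dv i 0)) ->
  is_derive s 1 (fun r => (P *m v r) j 0) ((P *m dv) j 0).
Proof.
move=> dvi; rewrite mulmx_entry_sum mxE.
by apply: is_derive_sum => i; exact: is_deriveZ.
Qed.

Lemma mulmx_entry_continuous (T : topologicalType) (v : T -> 'cV[R]_n) :
  (forall i, continuous (fun r => v r i 0)) ->
  continuous (fun r => (P *m v r) j 0).
Proof.
move=> cvi; rewrite mulmx_entry_sum.
elim/big_ind: _ => [|f g cf cg|i _]; first exact: cst_continuous.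
- by move=> r; apply: continuousD; [exact: cf | exact: cg].
- by move=> r; apply: continuousM; [exact: cst_continuous | exact: cvi].
Qed.
End MatrixEntry.

Lemma derive0_segment_cst (R : realType) (f : R -> R) (t : R) : 0 <= t ->
  (forall s, 0 < s -> s < t -> is_derive s 1 f 0) ->
  {within `[0, t], continuous f} -> f t = f 0.
Proof.
move=> t0 df cf.
have df' (s : R) : s \in `]0, t[%R -> is_derive s 1 f ((fun=> 0) s).
  by rewrite in_itv /= => /andP[s0 st]; exact: df.
have [c _] := MVT_segment t0 df' cf.
by rewrite mul0r => /eqP; rewrite subr_eq0 => /eqP.
Qed.

Theorem mainTheorem9 (R : realType) (M N L : nat)
    (A : 'M[R]_(M, N)) (b : 'cV[R]_M) (Adag : 'M[R]_(N, M))
    (x : R -> 'cV[R]_N) :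
  (0 < L)%N ->
  is_MP_pinv A Adag ->
  (* gradient flow  d/dt x = - grad L(x)  for t > 0, continuous on [0, oo) *)
  (forall i : 'I_N, {within [set t : R | 0 <= t], continuous (fun t => x t i 0)}) ->
  (forall (t : R) (i : 'I_N), 0 < t ->
     is_derive t 1 (fun s => x s i 0) (- gradL L A b (x t) i 0)) ->
  (* positivity of x(0) and of x(t) for all t >= 0 *)
  (forall t : R, 0 <= t -> forall i : 'I_N, 0 < x t i 0) ->
  forall t : R, 0 <= t ->
    (1%:M - Adag *m A) *m hvec L (x t) = (1%:M - Adag *m A) *m hvec L (x 0).
Proof.
move=> L0 MP cx dx pos t t0.
set P := 1%:M - Adag *m A.
apply/matrixP => j k; rewrite (ord1 k).
apply: (@derive0_segment_cst R (fun s => (P *m hvec L (x s)) j 0) t t0).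
- move=> s s0 _.
  set G := A^T *m (A *m epow (x s) L - b).
  have dh (i : 'I_N) : is_derive s 1 (fun r => hvec L (x r) i 0)
                                     ((- (hslope R L *: G)) i 0).
    rewrite hvec_comp 2!mxE; have := dx s i s0; rewrite /gradL mxE.
    exact: (@hfun_comp_derive R L (fun r => x r i 0) s _ L0 (pos s (ltW s0) i)).
  have PG0 : P *m G = 0 by rewrite /G mulmxA pinv_proj_mul_tr // mul0mx.
  have := @mulmx_entry_derive R _ _ P j _ _ _ dh.
  by rewrite mulmxN -scalemxAr PG0 scaler0 oppr0 mxE.
- apply: continuous_subspaceW (_ : `[0, t] `<=` [set s | 0 <= s]) _.
    by move=> s; rewrite /= in_itv /= => /andP[].
  apply: mulmx_entry_continuous => i; rewrite hvec_comp.
  apply: within_continuous_comp (cx i).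
  by move=> _ /set_mem [s /= s0 <-]; exact: hfun_continuous (pos s s0 i).
Qed.
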